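(* For a flat virtual braid $\beta\in FVB_n$ let $G(\beta)$ be the quotient of the free group $F_{2n}$ with free basis $x_1,\dots,x_n,y_1,\dots,y_n$ by the relations $\theta(\beta)(x_i)=x_i$, $\theta(\beta)(y_i)=y_i$ ($i=1,\dots,n$) together with the relations $y_1=y_2=\dots=y_n$. Then $G(\beta)$ depends (up to isomorphism) not on the braid $\beta$ but only on its closure $\widehat\beta$: if $\beta\in FVB_n$ and $\beta'\in FVB_{n'}$ have equivalent closures, then $G(\beta)\cong G(\beta')$.
   Context: $FVB_n$ is the flat virtual braid group: generators $\sigma_1,\dots,\sigma_{n-1},\rho_1,\dots,\rho_{n-1}$, relations $\sigma_i\sigma_j=\sigma_j\sigma_i$, $\rho_i\rho_j=\rho_j\rho_i$, $\sigma_i\rho_j=\rho_j\sigma_i$ for $|i-j|\ge2$; $\sigma_i\sigma_{i+1}\sigma_i=\sigma_{i+1}\sigma_i\sigma_{i+1}$; $\rho_i\rho_{i+1}\rho_i=\rho_{i+1}\rho_i\rho_{i+1}$; $\rho_i\rho_{i+1}\sigma_i=\sigma_{i+1}\rho_i\rho_{i+1}$; $\rho_i^2=\sigma_i^2=1$. $\theta:FVB_n\to{\rm Aut}(F_{2n})$ is the homomorphism with $\theta(\sigma_i):x_i\mapsto x_{i+1}y_{i+1},\ x_{i+1}\mapsto x_iy_{i+1}^{-1}$ and $\theta(\rho_i):x_i\leftrightarrow x_{i+1},\ y_i\leftrightarrow y_{i+1}$ (other generators fixed), automorphisms composed on the right, $(fg)(x)=g(f(x))$. The closure $\widehat\beta$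 of a flat virtual braid is the flat virtual link diagram obtained by joining the top and bottom endpoints of its strands (flat crossings for $\sigma_i$, virtual crossings for $\rho_i$), and closures are compared up to equivalence of flat virtual links. *)

From mathcomp Require Import all_boot.
From Stdlib Require Import Relation_Operators.
Set Implicit Arguments. Unset Strict Implicit. Unset Printing Implicit Defensive.

(* Generators of FVB_n, 0-based: [Sig i] is sigma_(i+1), [Rho i] is rho_(i+1),
   for i < n-1.  An element of FVB_n is represented by a word (seq) in these
   generators (they are involutions, so no inverse letters are needed).     *)
Inductive fvb_gen (n : nat) : Type :=
| Sig of 'I_n.-1
| Rho of 'I_n.-1.

(* A generator is (isy, i): x_i if isy = false, y_i if isy = true (0-based). *)
Definition fgen := (bool * nat)%type.
(* A letter is (generator, inverted?). *)
Definition fletter := (fgen * bool)%type.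
Definition fword := seq fletter.

Definition winv (u : fword) : fword := rev [seq (l.1, ~~ l.2) | l <- u].

Definition subst (s : fgen -> fword) (u : fword) : fword :=
  flatten [seq if l.2 then winv (s l.1) else s l.1 | l <- u].

Definition theta_gen n (g : fvb_gen n) (a : fgen) : fword :=
  match g with
  | Sig i =>
      if a.1 then [:: (a, false)]
      else if a.2 == i then [:: ((false, i.+1), false); ((true, i.+1), false)]
      else if a.2 == i.+1 then [:: ((false, nat_of_ord i), false); ((true, i.+1), true)]
      else [:: (a, false)]
  | Rho i =>
      let k := a.2 in
      let k' := if k == i then i.+1 else if k == i.+1 then nat_of_ord i else k in
      [:: ((a.1, k'), false)]
  end.

(* theta(beta)(a), with right composition (fg)(x) = g(f(x)):
   theta(g1 g2 ... gk)(a) = theta(gk)( ... theta(g1)(a) ...). *)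
Definition theta n (w : seq (fvb_gen n)) (a : fgen) : fword :=
  foldl (fun u g => subst (theta_gen g) u) [:: (a, false)] w.

Definition Grel n (w : seq (fvb_gen n)) (r : fword) : Prop :=
  exists i, i < n /\
    (r = theta w (false, i) ++ [:: ((false, i), true)] \/
     r = theta w (true, i) ++ [:: ((true, i), true)] \/
     (i.+1 < n /\ r = [:: ((true, i), false); ((true, i.+1), true)])).

(* Equality in the group <generators | R>: congruence generated by free
   cancellation and deletion of relators. *)
Inductive greq (R : fword -> Prop) : fword -> fword -> Prop :=
| greq_refl u : greq R u u
| greq_sym u v : greq R u v -> greq R v u
| greq_trans u v w : greq R u v -> greq R v w -> greq R u w
| greq_red u v (a : fletter) : greq R (u ++ a :: (a.1, ~~ a.2) :: v) (u ++ v)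
| greq_rel u v r : R r -> greq R (u ++ r ++ v) (u ++ v).

Definition valid (n : nat) (u : fword) : bool := all (fun l => l.1.2 < n) u.

(* Isomorphism of the presented groups <x_i, y_i (i<n) | R> and
   <x_i, y_i (i<n') | R'>: mutually inverse homomorphisms, given by
   images of generators respecting the relators. *)
Definition pres_iso (n : nat) (R : fword -> Prop) (n' : nat) (R' : fword -> Prop) : Prop :=
  exists (phi psi : fgen -> fword),
    (forall a : fgen, a.2 < n -> valid n' (phi a)) /\
    (forall a : fgen, a.2 < n' -> valid n (psi a)) /\
    (forall r, R r -> greq R' (subst phi r) [::]) /\
    (forall r, R' r -> greq R (subst psi r) [::]) /\
    (forall a : fgen, a.2 < n -> greq R (subst psi (phi a)) [:: (a, false)]) /\
    (forall a : fgen, a.2 < n' -> greq R' (subst phi (psi a)) [:: (a, false)]).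

(* A flat virtual link diagram is encoded by its (flat) Gauss diagram:
   one cyclic word per component, listing the passages through the flat
   crossings in order along the component.  A passage is (c, tl): c the
   crossing label, tl = true iff this passage is the tail of the arrow of
   crossing c.  Convention: the arrow goes from passage p to passage q iff
   (tangent_p, tangent_q) is a positive basis of the plane.  Virtual
   crossings are invisible. *)
Definition gletter := (nat * bool)%type.
Definition gdiag := seq (seq gletter).

Definition glabels (D : gdiag) : seq nat := [seq l.1 | l <- flatten D].

Definition ins_at (T : Type) (s : seq T) (p : nat) (x : seq T) : seq T :=
  take p s ++ x ++ drop p s.

Definition upd_comp (D : gdiag) (i : nat) (s : seq gletter) : gdiag :=
  set_nth [::] D i s.

Definition swap2 (s : seq gletter) (p : nat) : seq gletter :=
  take p s ++ [:: nth (0, false) s p.+1; nth (0, false) s p] ++ drop p.+2 s.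

Definition R1step (D D' : gdiag) : Prop :=
  exists i p c (b : bool), i < size D /\ c \notin glabels D /\
    D' = upd_comp D i (ins_at (nth [::] D i) p [:: (c, b); (c, ~~ b)]).

(* Reidemeister 2: insert a bigon between two arcs (parallel or antiparallel) *)
Definition R2step (D D' : gdiag) : Prop :=
  exists i p j q c d (ba antipar : bool),
    c \notin glabels D /\ d \notin glabels D /\ c != d /\
    i < size D /\ j < size D /\ ~~ ((i == j) && (q == p.+1)) /\
    let X := [:: (c, ba); (d, ~~ ba)] in
    let Y := if antipar then [:: (d, ba); (c, ~~ ba)]
             else [:: (c, ~~ ba); (d, ba)] in
    let D1 := upd_comp D i (ins_at (nth [::] D i) p X) in
    D' = upd_comp D1 j (ins_at (nth [::] D1 j) q Y).

Definition cluster (D : gdiag) (ip : nat * nat) : gletter * gletter :=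
  (nth (0, false) (nth [::] D ip.1) ip.2, nth (0, false) (nth [::] D ip.1) ip.2.+1).

Definition cl_ok (D : gdiag) (ip : nat * nat) : bool :=
  (ip.1 < size D) && (ip.2.+1 < size (nth [::] D ip.1)).

Definition disjoint_cl (ip jq : nat * nat) : bool :=
  (ip.1 != jq.1) || (ip.2.+1 < jq.2) || (jq.2.+1 < ip.2).

Definition tailof (X : gletter * gletter) (p : nat) : bool :=
  if X.1.1 == p then X.1.2 else X.2.2.

(* Reidemeister 3: three arcs A, B, C pairwise crossing (at crossings
   p = AB, q = BC, r = CA), each arc carrying its two crossings as
   consecutive passages; the move reverses the order on each arc.  The
   configuration must be realizable by a triangle of three oriented lines,
   which amounts to the parity condition below. *)
Definition R3step (D D' : gdiag) : Prop :=
  exists (a b c : nat * nat) (p q r : nat),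
    [&& cl_ok D a, cl_ok D b, cl_ok D c,
        disjoint_cl a b, disjoint_cl b c & disjoint_cl a c] /\
    [&& p != q, q != r & p != r] /\
    let A := cluster D a in let B := cluster D b in let C := cluster D c in
    perm_eq [:: A.1.1; A.2.1] [:: p; r] /\
    perm_eq [:: B.1.1; B.2.1] [:: p; q] /\
    perm_eq [:: C.1.1; C.2.1] [:: q; r] /\
    let fA := A.1.1 == p in   (* A meets B first *)
    let fB := B.1.1 == q in   (* B meets C first *)
    let fC := C.1.1 == r in   (* C meets A first *)
    let dAB := tailof A p in  (* arrow A -> B at crossing AB *)
    let dBC := tailof B q in
    let dCA := tailof C r in
    (dAB (+) fA (+) fB == dBC (+) fB (+) fC) /\
    (dBC (+) fB (+) fC == dCA (+) fC (+) fA) /\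
    let D1 := upd_comp D a.1 (swap2 (nth [::] D a.1) a.2) in
    let D2 := upd_comp D1 b.1 (swap2 (nth [::] D1 b.1) b.2) in
    D' = upd_comp D2 c.1 (swap2 (nth [::] D2 c.1) c.2).

Definition Rotstep (D D' : gdiag) : Prop :=
  exists i, i < size D /\ D' = upd_comp D i (rot 1 (nth [::] D i)).

Definition Permstep (D D' : gdiag) : Prop := perm_eq D D'.

Definition Relabstep (D D' : gdiag) : Prop :=
  exists f : nat -> nat, injective f /\ D' = [seq [seq (f l.1, l.2) | l <- s] | s <- D].

Definition fstep (D D' : gdiag) : Prop :=
  R1step D D' \/ R2step D D' \/ R3step D D' \/
  Rotstep D D' \/ Permstep D D' \/ Relabstep D D'.

Definition flat_equiv : gdiag -> gdiag -> Prop := clos_refl_sym_trans gdiag fstep.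

(* The braid word is drawn from top to bottom, strands oriented downwards;
   strands are identified by their top position.  At sigma_(i+1) the strand
   arriving at position i+1 carries the tail of the arrow, the one arriving
   at position i the head (positive-basis convention above).  The crossing
   label is the index of the letter in the word. *)
Definition swapn (pm : seq nat) (i : nat) : seq nat :=
  set_nth 0 (set_nth 0 pm i (nth 0 pm i.+1)) i.+1 (nth 0 pm i).

Definition push (L : seq (seq gletter)) (s : nat) (x : gletter) :=
  set_nth [::] L s (rcons (nth [::] L s) x).

Definition cl_step n (st : seq nat * seq (seq gletter)) (tg : nat * fvb_gen n) :=
  let: (pm, L) := st in
  let: (t, g) := tg in
  match g with
  | Sig i => let a := nth 0 pm i in let b := nth 0 pm i.+1 in
             (swapn pm i, push (push L b (t, true)) a (t, false))
  | Rho i => (swapn pm i, L)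
  end.

Definition cl_data n (w : seq (fvb_gen n)) :=
  foldl (@cl_step n) (iota 0 n, nseq n [::]) (zip (iota 0 (size w)) w).

Definition fvb_closure n (w : seq (fvb_gen n)) : gdiag :=
  let pmF := (cl_data w).1 in
  let L := (cl_data w).2 in
  (* strand s ends at bottom position (index s pmF), which is joined to the
     top of the strand starting at that position *)
  let nxt := fun s => index s pmF in
  let clen := fun s => (find (fun k => iter k.+1 nxt s == s) (iota 0 n)).+1 in
  let cyc := fun s => traject nxt s (clen s) in
  [seq flatten [seq nth [::] L j | j <- cyc s]
  | s <- iota 0 n & all (fun j => s <= j) (cyc s)].

From mathcomp Require Import all_boot all_algebra zify.
From Stdlib Require Import Setoid Morphisms.
Set Implicit Arguments. Unset Strict Implicit. Unset Printing Implicit Defensive.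
Import GRing.Theory.

(* Modulo the relations y_1 = ... = y_n, theta(beta) sends every y_i to some
   y_j and x_i to x_(pi i) y^(k_i), where pi is the strand permutation of beta
   and k_i is the number of flat crossings strand i enters on the left minus
   those it enters on the right.  Hence G(beta) = < x_i, y | x_(pi i) y^(k_i)
   = x_i >.  Walking along each cycle of pi, i.e. along each component of the
   closure, eliminates all x's but one per cycle and leaves
   < x_1..x_c, y | y^(K_1), ..., y^(K_c) >, where K_j is the sum of the k_i
   over the j-th component: the number of arrow heads minus arrow tails met
   along that component of the Gauss diagram.  Reidemeister moves insert or
   delete head/tail pairs on a component or permute passages, and the
   bookkeeping moves merely reorder or rename, so the multiset of the K_j,
   hence G(beta), is an invariant of the closure. *)

(** * Words and presented groups *)

#[global] Instance greq_Equivalence R : Equivalence (greq R).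
Proof. split; [exact: greq_refl | exact: greq_sym | exact: greq_trans]. Qed.

#[global] Hint Resolve greq_refl : core.

Lemma greq_catl R p u v : greq R u v -> greq R (p ++ u) (p ++ v).
Proof.
elim=> {u v} [u|u v _ IH|u v w _ IH1 _ IH2|u v a|u v r Rr].
- by [].
- by symmetry.
- by transitivity (p ++ v).
- by rewrite !catA; apply: greq_red.
- by rewrite catA [p ++ (u ++ v)]catA; apply: greq_rel.
Qed.

Lemma greq_catr R q u v : greq R u v -> greq R (u ++ q) (v ++ q).
Proof.
elim=> {u v} [u|u v _ IH|u v w _ IH1 _ IH2|u v a|u v r Rr].
- by [].
- by symmetry.
- by transitivity (v ++ q).
- by rewrite -!catA; apply: greq_red.
- by rewrite -!catA; apply: greq_rel.
Qed.

#[global] Instance cat_greq_Proper R : Proper (greq R ==> greq R ==> greq R) (@cat fletter).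
Proof. by move=> u u' uu' v v' vv'; rewrite (greq_catr v uu') (greq_catl u' vv'). Qed.

#[global] Instance cons_greq_Proper R a : Proper (greq R ==> greq R) (cons a).
Proof. by move=> u v; apply: (greq_catl [:: a]). Qed.

Lemma greq_relator R r : R r -> greq R r [::].
Proof. by move=> Rr; have := greq_rel [::] [::] Rr; rewrite /= cats0. Qed.

Lemma greq_sub (R R' : fword -> Prop) u v :
  (forall r, R r -> greq R' r [::]) -> greq R u v -> greq R' u v.
Proof.
move=> RR'; elim=> {u v} [u|u v _ IH|u v w _ IH1 _ IH2|u v a|u v r Rr].
- by [].
- by symmetry.
- by transitivity v.
- exact: greq_red.
- by rewrite (RR' r Rr).
Qed.

Definition linv (l : fletter) : fletter := (l.1, ~~ l.2).

Lemma greq_linvr R (a : fletter) : greq R [:: a; linv a] [::].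
Proof. exact: (greq_red R [::] [::] a). Qed.

Lemma winv_cat u v : winv (u ++ v) = winv v ++ winv u.
Proof. by rewrite /winv map_cat rev_cat. Qed.

Lemma winv_cons l u : winv (l :: u) = winv u ++ [:: linv l].
Proof. by rewrite -cat1s winv_cat. Qed.

Lemma winvK : involutive winv.
Proof.
move=> u; rewrite /winv map_rev revK -map_comp map_id_in // => -[a b] _ /=.
by rewrite negbK.
Qed.

Lemma winv_nseq (l : fletter) m : winv (nseq m l) = nseq m (linv l).
Proof. by rewrite /winv map_nseq rev_nseq. Qed.

Lemma greq_winvr R u : greq R (u ++ winv u) [::].
Proof.
elim: u => [|l u IH] //.
by rewrite winv_cons cat_cons catA IH; apply: greq_linvr.
Qed.

Lemma greq_winvl R u : greq R (winv u ++ u) [::].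
Proof. by have := greq_winvr R (winv u); rewrite winvK. Qed.

Lemma greq_catwinv R u v : greq R (u ++ winv v) [::] -> greq R u v.
Proof.
move=> uv; transitivity (u ++ winv v ++ v); first by rewrite greq_winvl cats0.
by rewrite catA uv.
Qed.

#[global] Instance winv_greq_Proper R : Proper (greq R ==> greq R) winv.
Proof. by move=> u v E; apply: greq_catwinv; rewrite winvK -E greq_winvl. Qed.

Definition subst_letter (s : fgen -> fword) (l : fletter) : fword :=
  if l.2 then winv (s l.1) else s l.1.

Lemma subst_cat s u v : subst s (u ++ v) = subst s u ++ subst s v.
Proof. by rewrite /subst map_cat flatten_cat. Qed.

Lemma subst_cons s l u : subst s (l :: u) = subst_letter s l ++ subst s u.
Proof. by []. Qed.

Lemma subst1 s a : subst s [:: (a, false)] = s a.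
Proof. by rewrite /subst /= cats0. Qed.

Lemma subst1V s a : subst s [:: (a, true)] = winv (s a).
Proof. by rewrite /subst /= cats0. Qed.

Lemma subst_letter_linv s l : subst_letter s (linv l) = winv (subst_letter s l).
Proof. by case: l => a [] /=; rewrite /subst_letter /= ?winvK. Qed.

Lemma subst_winv s u : subst s (winv u) = winv (subst s u).
Proof.
elim: u => [|l u IH] //.
by rewrite winv_cons subst_cat IH subst_cons winv_cat /subst /= cats0 subst_letter_linv.
Qed.

Lemma subst_comp s t u : subst t (subst s u) = subst (fun a => subst t (s a)) u.
Proof.
elim: u => [|[a b] u IH] //; rewrite !subst_cons subst_cat IH.
by case: b; rewrite /subst_letter //= subst_winv.
Qed.

Lemma subst_id u : subst (fun a => [:: (a, false)]) u = u.
Proof. by elim: u => [|[a b] u IH] //; rewrite subst_cons IH; case: b. Qed.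

Lemma greq_subst (R R' : fword -> Prop) s u v :
  (forall r, R r -> greq R' (subst s r) [::]) -> greq R u v ->
  greq R' (subst s u) (subst s v).
Proof.
move=> Rs; elim=> {u v} [u|u v _ IH|u v w _ IH1 _ IH2|u v a|u v r Rr].
- by [].
- by symmetry.
- by transitivity (subst s v).
- rewrite !subst_cat !subst_cons -/(linv a) subst_letter_linv.
  by rewrite (catA (subst_letter s a)) greq_winvr.
- by rewrite !subst_cat (Rs r Rr).
Qed.

Lemma valid_cat m u v : valid m (u ++ v) = valid m u && valid m v.
Proof. by rewrite /valid all_cat. Qed.

Lemma valid_winv m u : valid m (winv u) = valid m u.
Proof. by rewrite /valid all_rev all_map. Qed.

Lemma valid_subst m k s u :
  (forall a, a.2 < m -> valid k (s a)) -> valid m u -> valid k (subst s u).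
Proof.
move=> Vs; elim: u => [|[a b] u IH] //= /andP [Va Vu].
by rewrite subst_cons valid_cat IH // andbT /subst_letter; case: b; rewrite ?valid_winv Vs.
Qed.

Lemma greq_subst_cancel (R : fword -> Prop) m s t u :
  (forall a, a.2 < m -> greq R (subst t (s a)) [:: (a, false)]) -> valid m u ->
  greq R (subst t (subst s u)) u.
Proof.
move=> ts; elim: u => [|[a b] u IH] //= /andP [Va Vu].
rewrite subst_cons subst_cat IH // -cat1s /subst_letter.
by case: b => /=; rewrite ?subst_winv ts.
Qed.

Lemma pres_iso_sym n R n' R' : pres_iso n R n' R' -> pres_iso n' R' n R.
Proof. by case=> phi [psi [? [? [? [? [? ?]]]]]]; exists psi, phi. Qed.

Lemma pres_iso_trans n1 R1 n2 R2 n3 R3 :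
  pres_iso n1 R1 n2 R2 -> pres_iso n2 R2 n3 R3 -> pres_iso n1 R1 n3 R3.
Proof.
case=> phi1 [psi1 [V1 [W1 [A1 [B1 [C1 D1]]]]]].
case=> phi2 [psi2 [V2 [W2 [A2 [B2 [C2 D2]]]]]].
exists (fun a => subst phi2 (phi1 a)), (fun a => subst psi1 (psi2 a)).
split; [|split; [|split; [|split; [|split]]]].
- by move=> a lt_a; apply: valid_subst (V1 _ lt_a).
- by move=> a lt_a; apply: valid_subst (W2 _ lt_a).
- by move=> r Rr; rewrite -(subst_comp phi1 phi2); apply: (greq_subst A2 (A1 _ Rr)).
- by move=> r Rr; rewrite -(subst_comp psi2 psi1); apply: (greq_subst B1 (B2 _ Rr)).
- move=> a lt_a; rewrite -(subst_comp psi2 psi1) -C1 //.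
  by apply: greq_subst B1 _; apply: greq_subst_cancel C2 (V1 _ lt_a).
- move=> a lt_a; rewrite -(subst_comp phi1 phi2) -D2 //.
  by apply: greq_subst A2 _; apply: greq_subst_cancel D1 (W2 _ lt_a).
Qed.

Lemma pres_iso_eqrel n R R' :
  (forall r, R r -> greq R' r [::]) -> (forall r, R' r -> greq R r [::]) ->
  pres_iso n R n R'.
Proof.
move=> RR' R'R; exists (fun a => [:: (a, false)]), (fun a => [:: (a, false)]).
split; [|split; [|split; [|split; [|split]]]].
- by move=> a lt_a; rewrite /valid /= lt_a.
- by move=> a lt_a; rewrite /valid /= lt_a.
- by move=> r Rr; rewrite subst_id; apply: RR'.
- by move=> r Rr; rewrite subst_id; apply: R'R.
- by move=> a _; rewrite subst1.
- by move=> a _; rewrite subst1.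
Qed.

Definition X i : fletter := ((false, i), false).
Definition XV i : fletter := ((false, i), true).
Definition Y i : fletter := ((true, i), false).
Definition YV i : fletter := ((true, i), true).

Section YPowers.
Local Open Scope ring_scope.

Definition ypow j (z : int) : fword :=
  if 0 <= z then nseq `|z|%N (Y j) else nseq `|z|%N (YV j).

Lemma ypow_nat j m : ypow j m%:Z = nseq m (Y j).
Proof. by []. Qed.

Lemma ypow_oppn j m : ypow j (- m%:Z) = nseq m (YV j).
Proof. by case: m. Qed.

Lemma winv_ypow j z : winv (ypow j z) = ypow j (- z).
Proof.
case: z => m; first by rewrite ypow_nat ypow_oppn winv_nseq.
by rewrite NegzE opprK ypow_oppn ypow_nat winv_nseq.
Qed.

Lemma ypowS R j z : greq R (ypow j (1 + z)) (Y j :: ypow j z).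
Proof.
case: z => m; first by rewrite -[1 + m%:Z]/(m.+1%:Z).
have -> : 1 + Negz m = - m%:Z by lia.
by rewrite NegzE ypow_oppn; symmetry; apply: (greq_red R [::] _ (Y j)).
Qed.

Lemma ypowN R j z : greq R (ypow j (-1 + z)) (YV j :: ypow j z).
Proof.
case: z => m; last by rewrite NegzE -opprD -[1 + m.+1%:Z]/(m.+2%:Z) !ypow_oppn.
case: m => [|m] //.
have -> : -1 + m.+1%:Z = m%:Z by lia.
by symmetry; apply: (greq_red R [::] _ (YV j)).
Qed.

Lemma ypowD R j a b : greq R (ypow j (a + b)) (ypow j a ++ ypow j b).
Proof.
elim/int_rec: a => [|m IH|m IH]; first by rewrite add0r.
- have -> : m.+1%:Z + b = 1 + (m%:Z + b) by lia.
  by rewrite ypowS IH ypow_nat.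
- have -> : - m.+1%:Z + b = -1 + (- m%:Z + b) by lia.
  by rewrite ypowN IH !ypow_oppn.
Qed.

End YPowers.

Lemma subst_ypow s j0 j z : s (true, j0) = [:: Y j] -> subst s (ypow j0 z) = ypow j z.
Proof.
move=> sj0; rewrite /ypow; case: ifP => _; elim: `|z|%N => [|m IH] //=.
- by rewrite subst_cons IH /subst_letter /= sj0.
- by rewrite subst_cons IH /subst_letter /= sj0.
Qed.

Lemma valid_ypow c j z : j < c -> valid c (ypow j z).
Proof. by move=> jc; rewrite /valid /ypow; case: ifP => _; apply/allP => l /nseqP [-> _]. Qed.

Definition yrel n (r : fword) : Prop := exists i, i.+1 < n /\ r = [:: Y i; YV i.+1].

Section IdentifiedYs.
Variables (n : nat) (R : fword -> Prop).
Hypothesis yrelR : forall r, yrel n r -> greq R r [::].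

Lemma greq_Y0 i : i < n -> greq R [:: Y i] [:: Y 0].
Proof.
elim: i => [|i IH] lt_in //.
rewrite -IH; last lia.
by symmetry; apply: greq_catwinv; apply: yrelR; exists i.
Qed.

Lemma greq_Y i j : i < n -> j < n -> greq R [:: Y i] [:: Y j].
Proof. by move=> lt_in lt_jn; rewrite greq_Y0 // (greq_Y0 lt_jn). Qed.

Lemma greq_YV i j : i < n -> j < n -> greq R [:: YV i] [:: YV j].
Proof. by move=> lt_in lt_jn; apply: (winv_greq_Proper (greq_Y lt_in lt_jn)). Qed.

Lemma greq_ypow i j z : i < n -> j < n -> greq R (ypow i z) (ypow j z).
Proof.
move=> lt_in lt_jn; rewrite /ypow; case: ifP => _; elim: `|z|%N => [|m IH] //=.
- by rewrite -cat1s IH (greq_Y lt_in lt_jn).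
- by rewrite -cat1s IH (greq_YV lt_in lt_jn).
Qed.

Lemma greq_YYV i j : i < n -> j < n -> greq R [:: Y i; YV j] [::].
Proof. by move=> lt_in lt_jn; rewrite -cat1s (greq_Y lt_in lt_jn); apply: greq_linvr. Qed.

End IdentifiedYs.

(** * Following the strands of a braid *)

Definition strand_step n (pk : nat * int) (g : fvb_gen n) : nat * int :=
  let: (p, k) := pk in
  match g with
  | Sig i => if p == i then (i.+1, (k + 1)%R)
             else if p == i.+1 then (nat_of_ord i, (k - 1)%R) else (p, k)
  | Rho i => (if p == i then i.+1 else if p == i.+1 then nat_of_ord i else p, k)
  end.

(* The bottom position of the strand starting at position [i], and the
   number of flat crossings it enters from the left minus those it enters
   from the right. *)
Definition follow n (w : seq (fvb_gen n)) (i : nat) : nat * int :=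
  foldl (@strand_step n) (i, 0%R) w.

Lemma follow_rcons n (w : seq (fvb_gen n)) g i :
  follow (rcons w g) i = strand_step (follow w i) g.
Proof. by rewrite /follow foldl_rcons. Qed.

Lemma theta_rcons n (w : seq (fvb_gen n)) g a :
  theta (rcons w g) a = subst (theta_gen g) (theta w a).
Proof. by rewrite /theta foldl_rcons. Qed.

Lemma theta_gen_y n (g : fvb_gen n) a : a < n ->
  exists2 b, b < n & theta_gen g (true, a) = [:: Y b].
Proof.
move=> lt_an; case: g => i /=; first by exists a.
have := ltn_ord i.
by exists (if a == i then i.+1 else if a == i.+1 then nat_of_ord i else a);
  do 2?case: eqP => _ //=; lia.
Qed.

Lemma theta_y n (w : seq (fvb_gen n)) i : i < n ->
  exists2 j, j < n & theta w (true, i) = [:: Y j].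
Proof.
move=> lt_in; elim/last_ind: w => [|w g [j lt_jn Ej]]; first by exists i.
by rewrite theta_rcons Ej subst1; apply: theta_gen_y.
Qed.

Lemma theta_gen_yrel n (g : fvb_gen n) r :
  yrel n r -> greq (yrel n) (subst (theta_gen g) r) [::].
Proof.
case=> i [lt_i1n ->].
have [a1 lt_a1n E1] := theta_gen_y g (ltnW lt_i1n).
have [a2 lt_a2n E2] := theta_gen_y g lt_i1n.
rewrite subst_cons /subst_letter /= E1 subst1V E2.
exact: (greq_YYV (@greq_relator (yrel n)) lt_a1n lt_a2n).
Qed.

Lemma theta_x n (w : seq (fvb_gen n)) i :
  greq (yrel n) (theta w (false, i)) (X (follow w i).1 :: ypow 0 (follow w i).2).
Proof.
elim/last_ind: w => [|w g IH] //.
rewrite theta_rcons follow_rcons; case: (follow w i) IH => p k IH.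
rewrite (greq_subst (@theta_gen_yrel n g) IH) subst_cons.
have gt0n : 0 < n by case: g => j; have := ltn_ord j; lia.
have [j lt_jn Ej] := theta_gen_y g gt0n.
rewrite (subst_ypow _ Ej) (greq_ypow (@greq_relator (yrel n)) _ lt_jn gt0n).
case: g Ej => i' Ej; rewrite /subst_letter /=; last by [].
have lt_i'1n : i'.+1 < n by have := ltn_ord i'; lia.
case: eqP => _.
  rewrite addrC ypowS; apply: cons_greq_Proper.
  exact: (cat_greq_Proper (greq_Y (@greq_relator (yrel n)) lt_i'1n gt0n) (greq_refl _ (ypow 0 k))).
case: eqP => _ //.
rewrite addrC ypowN; apply: cons_greq_Proper.
exact: (cat_greq_Proper (greq_YV (@greq_relator (yrel n)) lt_i'1n gt0n) (greq_refl _ (ypow 0 k))).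
Qed.

(* The presentation < x_0..x_(n-1), y | x_(tau i) y^(k i) = x_i >, with [y]
   spread over the [y_i] by [yrel]. *)
Definition strand_rel n (tau : nat -> nat) (k : nat -> int) (r : fword) : Prop :=
  (exists2 i, i < n & r = X (tau i) :: ypow 0 (k i) ++ [:: XV i]) \/ yrel n r.

Lemma strand_rel_yrel n tau k r : yrel n r -> greq (strand_rel n tau k) r [::].
Proof. by move=> yr; apply: greq_relator; right. Qed.

Lemma Grel_yrel n (w : seq (fvb_gen n)) r : yrel n r -> greq (Grel w) r [::].
Proof. by case=> i [lt_i1n ->]; apply: greq_relator; exists i; split; [lia | right; right]. Qed.

Lemma pres_iso_Grel_strand_rel n (w : seq (fvb_gen n)) :
  pres_iso n (Grel w) n (strand_rel n (fun i => (follow w i).1) (fun i => (follow w i).2)).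
Proof.
apply: pres_iso_eqrel => r.
- case=> i [lt_in [->|[->|[lt_i1n ->]]]].
  + rewrite (greq_sub (@strand_rel_yrel n _ _) (theta_x w i)).
    by apply: greq_relator; left; exists i.
  + have [j lt_jn ->] := theta_y w lt_in.
    exact: (greq_YYV (@strand_rel_yrel n _ _) lt_jn lt_in).
  + by apply: strand_rel_yrel; exists i.
- case=> [[i lt_in ->]|]; last exact: Grel_yrel.
  rewrite -cat_cons -(greq_sub (@Grel_yrel n w) (theta_x w i)).
  by apply: greq_relator; exists i; split => //; left.
Qed.

Definition scount (l : seq gletter) : int :=
  ((count (fun x : gletter => ~~ x.2) l)%:Z - (count (fun x : gletter => x.2) l)%:Z)%R.

Lemma scount_cat l1 l2 : scount (l1 ++ l2) = (scount l1 + scount l2)%R.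
Proof. rewrite /scount !count_cat; lia. Qed.

Lemma scount_rcons l x : scount (rcons l x) = (scount l + (if x.2 then -1 else 1))%R.
Proof. by rewrite -cats1 scount_cat; case: x => a []. Qed.

Lemma scount_flatten (ss : seq (seq gletter)) :
  scount (flatten ss) = (\sum_(l <- ss) scount l)%R.
Proof. by elim: ss => [|l ss IH]; rewrite ?big_nil // big_cons scount_cat IH. Qed.

Lemma nth_swapn pm i q : nth 0 (swapn pm i) q =
  if q == i.+1 then nth 0 pm i else if q == i then nth 0 pm i.+1 else nth 0 pm q.
Proof. by rewrite /swapn !nth_set_nth /=; case: eqP => // _; rewrite nth_set_nth. Qed.

Lemma size_swapn pm i : i.+1 < size pm -> size (swapn pm i) = size pm.
Proof. by move=> lt_i1; rewrite /swapn !size_set_nth; lia. Qed.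

Lemma nth_push L s x j : nth [::] (push L s x) j =
  if j == s then rcons (nth [::] L s) x else nth [::] L j.
Proof. by rewrite /push nth_set_nth. Qed.

Lemma cl_data_rcons n (w : seq (fvb_gen n)) g :
  cl_data (rcons w g) = cl_step (cl_data w) (size w, g).
Proof.
rewrite /cl_data size_rcons -addn1 iotaD add0n cats1 zip_rcons ?size_iota //.
by rewrite foldl_rcons.
Qed.

Lemma uniq_nth_onto n (pm : seq nat) (f : nat -> nat) :
  size pm = n -> (forall s, s < n -> f s < n /\ nth 0 pm (f s) = s) -> uniq pm.
Proof.
move=> Epm onto; apply: (leq_size_uniq (iota_uniq 0 n)); last by rewrite Epm size_iota.
by move=> s; rewrite mem_iota => /andP [_ /onto [lt_fs <-]]; rewrite mem_nth ?Epm.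
Qed.

(* [(cl_data w).1] lists the strands by bottom position, [(cl_data w).2]
   the passages of each strand. *)
Lemma cl_data_follow n (w : seq (fvb_gen n)) :
  size (cl_data w).1 = n /\ forall s, s < n ->
    [/\ (follow w s).1 < n, nth 0 (cl_data w).1 (follow w s).1 = s &
        scount (nth [::] (cl_data w).2 s) = (follow w s).2].
Proof.
elim/last_ind: w => [|w g [Epm IH]].
  split=> [|s lt_sn]; first by rewrite size_iota.
  by split; rewrite ?nth_iota ?nth_nseq ?lt_sn.
rewrite cl_data_rcons; case: (cl_data w) Epm IH => pm L /= Epm IH.
have uniq_pm : uniq pm.
  by apply: (uniq_nth_onto (f := fun s => (follow w s).1) Epm) => s /IH [].
have nth_pm_eq p q : p < n -> q < n -> (nth 0 pm p == nth 0 pm q) = (p == q).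
  by move=> lt_pn lt_qn; rewrite nth_uniq ?Epm.
case: g => i; have lt_i1n : i.+1 < n by have := ltn_ord i; lia.
all: split=> [|s lt_sn]; first by rewrite size_swapn ?Epm.
all: rewrite follow_rcons; have [] := IH s lt_sn.
all: case: (follow w s) => p k /= lt_pn <- Ek.
- have ne_ab : (nth 0 pm i == nth 0 pm i.+1) = false by rewrite nth_pm_eq //; lia.
  case: (p =P i) Ek => [->|/eqP ne_pi] Ek.
    rewrite nth_swapn eqxx; split=> //.
    by rewrite nth_push eqxx scount_rcons nth_push ne_ab Ek.
  case: (p =P i.+1) Ek => [->|/eqP ne_pi1] Ek.
    rewrite nth_swapn ltn_eqF // eqxx; split=> //=; first lia.
    by rewrite nth_push eq_sym ne_ab nth_push eqxx scount_rcons Ek.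
  rewrite nth_swapn (negbTE ne_pi) (negbTE ne_pi1).
  by rewrite !nth_push !nth_pm_eq ?(ltnW lt_i1n) // (negbTE ne_pi) (negbTE ne_pi1).
- case: (p =P i) Ek => [->|/eqP ne_pi] Ek; first by rewrite nth_swapn eqxx.
  case: (p =P i.+1) Ek => [->|/eqP ne_pi1] Ek.
    by rewrite nth_swapn ltn_eqF // eqxx; split=> //; lia.
  by rewrite nth_swapn (negbTE ne_pi) (negbTE ne_pi1).
Qed.

Lemma cl_data_index n (w : seq (fvb_gen n)) s :
  s < n -> index s (cl_data w).1 = (follow w s).1.
Proof.
move=> lt_sn; have [Epm IH] := cl_data_follow w; have [lt_fn Es _] := IH s lt_sn.
have uniq_pm : uniq (cl_data w).1.
  by apply: (uniq_nth_onto (f := fun s => (follow w s).1) Epm) => t /IH [].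
by rewrite -{1}Es index_uniq ?Epm.
Qed.

(** * Invariance under flat moves *)

Lemma size_upd_comp D i t : i < size D -> size (upd_comp D i t) = size D.
Proof. by move=> lt_iD; rewrite /upd_comp size_set_nth; lia. Qed.

Lemma nth_upd_comp D i t j :
  nth [::] (upd_comp D i t) j = if j == i then t else nth [::] D j.
Proof. by rewrite /upd_comp nth_set_nth. Qed.

Lemma scounts_upd_comp D i t : i < size D -> scount t = scount (nth [::] D i) ->
  map scount (upd_comp D i t) = map scount D.
Proof.
move=> lt_iD Et; apply: (@eq_from_nth _ 0%R); first by rewrite !size_map size_upd_comp.
move=> j; rewrite size_map size_upd_comp // => lt_jD.
by rewrite !(nth_map [::]) ?size_upd_comp // nth_upd_comp; case: eqP => // ->.
Qed.

Lemma scount_ins_at s p x : scount (ins_at s p x) = (scount s + scount x)%R.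
Proof.
by rewrite -{2}(cat_take_drop p s) /ins_at !scount_cat; lia.
Qed.

Lemma swap2E s p : p.+1 < size s ->
  s = take p s ++ [:: nth (0, false) s p; nth (0, false) s p.+1] ++ drop p.+2 s.
Proof.
move=> lt_p1s; rewrite -{1}(cat_take_drop p s) (drop_nth (0, false)); last lia.
by rewrite (drop_nth (0, false)).
Qed.

Lemma scount_swap2 s p : p.+1 < size s -> scount (swap2 s p) = scount s.
Proof.
move/swap2E=> {2}->; rewrite /swap2 !scount_cat; congr (_ + (_ + _))%R.
by case: (nth _ s p) (nth _ s p.+1) => [? []] [? []].
Qed.

Lemma size_swap2 s p : p.+1 < size s -> size (swap2 s p) = size s.
Proof. by move/swap2E=> {2}->; rewrite /swap2 !size_cat. Qed.

Lemma upd_comp_swap2 D i p : i < size D -> p.+1 < size (nth [::] D i) ->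
  let D1 := upd_comp D i (swap2 (nth [::] D i) p) in
  [/\ map scount D1 = map scount D, size D1 = size D &
      forall j, size (nth [::] D1 j) = size (nth [::] D j)].
Proof.
move=> lt_iD lt_p1; split.
- by apply: scounts_upd_comp => //; rewrite scount_swap2.
- by rewrite size_upd_comp.
- by move=> j; rewrite nth_upd_comp; case: eqP => // ->; rewrite size_swap2.
Qed.

Lemma scount_rot s : scount (rot 1 s) = scount s.
Proof. by rewrite -{2}(cat_take_drop 1 s) /rot !scount_cat addrC. Qed.

Lemma fstep_perm_scounts D D' : fstep D D' -> perm_eq (map scount D) (map scount D').
Proof.
case=> [|[|[|[|[|]]]]].
- case=> i [p [c [b [lt_iD [_ ->]]]]].
  by rewrite scounts_upd_comp // scount_ins_at; case: b; rewrite addr0.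
- case=> i [p [j [q [c [d [ba [antipar [_ [_ [_ [lt_iD [lt_jD [_ ->]]]]]]]]]]]]].
  set D1 := upd_comp D i _.
  have E1 : map scount D1 = map scount D.
    by rewrite scounts_upd_comp // scount_ins_at; case: (ba); rewrite addr0.
  rewrite scounts_upd_comp ?size_upd_comp ?E1 // scount_ins_at.
  by case: (antipar); case: (ba); rewrite addr0.
- case=> a [b [c [p [q [r [/and5P [a_ok b_ok c_ok _ _] [_ [_ [_ [_ [_ [_ ->]]]]]]]]]]]].
  move: a_ok b_ok c_ok; rewrite /cl_ok => /andP [a1 a2] /andP [b1 b2] /andP [c1 c2].
  have [E1 S1 N1] := upd_comp_swap2 a1 a2.
  set D1 := upd_comp D a.1 _.
  have [E2 S2 N2] := @upd_comp_swap2 D1 b.1 b.2 ltac:(by rewrite S1) ltac:(by rewrite N1).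
  set D2 := upd_comp D1 b.1 _.
  have [E3 _ _] := @upd_comp_swap2 D2 c.1 c.2 ltac:(by rewrite S2 S1) ltac:(by rewrite N2 N1).
  by rewrite E3 E2 E1.
- by case=> i [lt_iD ->]; rewrite scounts_upd_comp // scount_rot.
- by move=> pDD'; rewrite perm_map.
- case=> f [_ ->]; rewrite -map_comp (@eq_map _ _ _ scount) // => s /=.
  by rewrite /scount !count_map.
Qed.

Lemma flat_equiv_perm_scounts D D' :
  flat_equiv D D' -> perm_eq (map scount D) (map scount D').
Proof.
elim=> [x y /fstep_perm_scounts //|x //|x y _|x y z _ IH1 _ IH2].
- by rewrite perm_sym.
- exact: perm_trans IH1 IH2.
Qed.

(** * Cycles of a permutation of [0, n) *)

Lemma find_first_nth (T : Type) (P : pred T) x0 s m :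
  m < size s -> P (nth x0 s m) -> (forall k, k < m -> ~~ P (nth x0 s k)) ->
  find P s = m.
Proof.
move=> lt_ms Pm before_m; have has_P : has P s by apply/(has_nthP x0); exists m.
case: (ltngtP (find P s) m) => // [lt_fm|lt_mf].
- by have := before_m _ lt_fm; rewrite nth_find.
- by have := before_find x0 lt_mf; rewrite Pm.
Qed.

Definition power_rel c (Ks : seq int) (r : fword) : Prop :=
  (exists2 K, K \in Ks & r = ypow 0 K) \/ yrel c r.

Lemma power_rel_yrel c Ks r : yrel c r -> greq (power_rel c Ks) r [::].
Proof. by move=> yr; apply: greq_relator; right. Qed.

Section Cycles.
Variables (n : nat) (nxt : nat -> nat).

Definition cycle_len s := (find (fun k => iter k.+1 nxt s == s) (iota 0 n)).+1.
Definition cycle_of s := traject nxt s (cycle_len s).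
Definition cycle_reps := [seq s <- iota 0 n | all (fun j => s <= j) (cycle_of s)].

Hypothesis nxt_lt : forall s, s < n -> nxt s < n.
Hypothesis nxt_inj : forall s t, s < n -> t < n -> nxt s = nxt t -> s = t.

Definition nxt_ord (i : 'I_n) : 'I_n := Ordinal (nxt_lt (ltn_ord i)).

Lemma nxt_ord_inj : injective nxt_ord.
Proof. by move=> i j /(congr1 val) /= E; apply/val_inj/(nxt_inj (ltn_ord i) (ltn_ord j) E). Qed.

Lemma iter_nxt_ord k (i : 'I_n) : val (iter k nxt_ord i) = iter k nxt i.
Proof. by elim: k => //= k ->. Qed.

Lemma iter_nxt_lt k s : s < n -> iter k nxt s < n.
Proof. by move=> lt_sn; elim: k => //= k; apply: nxt_lt. Qed.

Lemma cycle_len_order (i : 'I_n) : cycle_len i = fingraph.order nxt_ord i.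
Proof.
rewrite /cycle_len -(orderSpred nxt_ord i); congr _.+1.
have le_on : fingraph.order nxt_ord i <= n.
  by rewrite -[X in _ <= X]card_ord; apply: max_card.
have lt_in := ltn_ord i.
apply: (@find_first_nth _ _ 0); rewrite ?size_iota; first lia.
- rewrite nth_iota ?add0n; last lia.
  by rewrite orderSpred -iter_nxt_ord (iter_order nxt_ord_inj).
- move=> k lt_k; rewrite nth_iota ?add0n; last lia.
  rewrite -iter_nxt_ord; apply/negP => /eqP iterk1.
  have {}iterk1 : iter k.+1 nxt_ord i = i by apply: val_inj.
  have lt_k1o : k.+1 < fingraph.order nxt_ord i by lia.
  have lt_k1 : k.+1 < size (orbit nxt_ord i) by rewrite size_orbit.
  have lt_0 : 0 < size (orbit nxt_ord i) by rewrite size_orbit order_gt0.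
  have := nth_uniq i lt_k1 lt_0 (orbit_uniq nxt_ord i).
  by rewrite /orbit !nth_traject ?order_gt0 ?lt_k1o // iterk1 eqxx.
Qed.

Lemma map_val_traject_nxt_ord m (i : 'I_n) : map val (traject nxt_ord i m) = traject nxt i m.
Proof. by elim: m i => //= m IH i; rewrite IH. Qed.

Lemma cycle_of_orbit (i : 'I_n) : cycle_of i = map val (orbit nxt_ord i).
Proof. by rewrite /orbit map_val_traject_nxt_ord -cycle_len_order. Qed.

Lemma mem_cycle_of (i j : 'I_n) : (val j \in cycle_of i) = fconnect nxt_ord i j.
Proof. by rewrite cycle_of_orbit (mem_map val_inj) fconnect_orbit. Qed.

Lemma cycle_of_lt s j : s < n -> j \in cycle_of s -> j < n.
Proof. by move=> lt_sn /trajectP [k _ ->]; apply: iter_nxt_lt. Qed.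

Lemma size_cycle_of s : size (cycle_of s) = cycle_len s.
Proof. exact: size_traject. Qed.

Lemma nth_cycle_of s t : t < cycle_len s -> nth 0 (cycle_of s) t = iter t nxt s.
Proof. by move=> lt_t; rewrite (set_nth_default s) ?size_traject // nth_traject. Qed.

Lemma cycle_of_uniq s : s < n -> uniq (cycle_of s).
Proof.
move=> lt_sn; rewrite -[s]/(val (Ordinal lt_sn)) cycle_of_orbit (map_inj_uniq val_inj).
exact: orbit_uniq.
Qed.

Lemma iter_cycle_len s : s < n -> iter (cycle_len s) nxt s = s.
Proof.
move=> lt_sn; rewrite -[s]/(val (Ordinal lt_sn)) cycle_len_order -iter_nxt_ord.
by rewrite iter_order //; apply: nxt_ord_inj.
Qed.

Lemma cycle_of_self s : s \in cycle_of s.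
Proof. exact: mem_head. Qed.

Lemma mem_cycle_reps s : (s \in cycle_reps) = (s < n) && all (fun j => s <= j) (cycle_of s).
Proof. by rewrite mem_filter mem_iota andbC. Qed.

Lemma cycle_reps_lt s : s \in cycle_reps -> s < n.
Proof. by rewrite mem_cycle_reps => /andP []. Qed.

Lemma cycle_reps_uniq : uniq cycle_reps.
Proof. exact/filter_uniq/iota_uniq. Qed.

Lemma cycle_of_sym s t : s < n -> t < n -> t \in cycle_of s -> s \in cycle_of t.
Proof.
move=> lt_sn lt_tn.
rewrite -[s]/(val (Ordinal lt_sn)) -[t]/(val (Ordinal lt_tn)) !mem_cycle_of.
by rewrite fconnect_sym //; apply: nxt_ord_inj.
Qed.

Lemma cycle_of_trans s t u : s < n -> t < n -> u < n ->
  t \in cycle_of s -> u \in cycle_of t -> u \in cycle_of s.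
Proof.
move=> lt_sn lt_tn lt_un.
rewrite -[s]/(val (Ordinal lt_sn)) -[t]/(val (Ordinal lt_tn)) -[u]/(val (Ordinal lt_un)).
rewrite !mem_cycle_of; exact: connect_trans.
Qed.

Lemma mem_cycle_of_nxt s i : s < n -> i < n -> (nxt i \in cycle_of s) = (i \in cycle_of s).
Proof.
move=> lt_sn lt_in; rewrite -[s]/(val (Ordinal lt_sn)) -[i]/(val (Ordinal lt_in)).
rewrite -[nxt _]/(val (nxt_ord (Ordinal lt_in))) !mem_cycle_of.
by rewrite -same_fconnect1_r //; apply: nxt_ord_inj.
Qed.

(* The least element of the cycle of [i] is the representative of that cycle. *)
Lemma cycle_repsP i : i < n -> exists2 s, s \in cycle_reps & i \in cycle_of s.
Proof.
move=> lt_in; have [s s_in min_s] := ex_minnP (ex_intro _ i (cycle_of_self i)).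
have lt_sn := cycle_of_lt lt_in s_in.
exists s; last exact: cycle_of_sym.
rewrite mem_cycle_reps lt_sn; apply/allP => j j_in; have lt_jn := cycle_of_lt lt_sn j_in.
by apply: min_s; apply: cycle_of_trans s_in j_in.
Qed.

Lemma cycle_reps_eq s t i : s \in cycle_reps -> t \in cycle_reps ->
  i \in cycle_of s -> i \in cycle_of t -> s = t.
Proof.
move=> s_rep t_rep i_s i_t; have lt_sn := cycle_reps_lt s_rep; have lt_tn := cycle_reps_lt t_rep.
have lt_in := cycle_of_lt lt_sn i_s.
have t_s : t \in cycle_of s by apply: cycle_of_trans i_s (cycle_of_sym _ _ i_t).
have s_t : s \in cycle_of t by apply: cycle_of_sym.
move: s_rep t_rep; rewrite !mem_cycle_reps => /andP [_ /allP min_s] /andP [_ /allP min_t].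
by apply/eqP; rewrite eqn_leq min_s ?min_t.
Qed.

Definition cycle_no i := find (fun s => i \in cycle_of s) cycle_reps.
Definition cycle_rep i := nth 0 cycle_reps (cycle_no i).
Definition cycle_pos i := index i (cycle_of (cycle_rep i)).

Lemma cycle_no_lt i : i < n -> cycle_no i < size cycle_reps.
Proof. by move=> /cycle_repsP [s s_rep i_s]; rewrite -has_find; apply/hasP; exists s. Qed.

Lemma cycle_rep_in i : i < n -> cycle_rep i \in cycle_reps.
Proof. by move=> lt_in; rewrite mem_nth // cycle_no_lt. Qed.

Lemma cycle_rep_lt i : i < n -> cycle_rep i < n.
Proof. by move=> /cycle_rep_in /cycle_reps_lt. Qed.

Lemma mem_cycle_of_rep i : i < n -> i \in cycle_of (cycle_rep i).
Proof.
move=> /cycle_repsP [s s_rep i_s].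
by apply: (nth_find 0 (a := fun s => i \in cycle_of s)); apply/hasP; exists s.
Qed.

Lemma cycle_no_nxt i : i < n -> cycle_no (nxt i) = cycle_no i.
Proof.
by move=> lt_in; apply: eq_in_find => s /cycle_reps_lt lt_sn /=; apply: mem_cycle_of_nxt.
Qed.

Lemma cycle_rep_nxt i : i < n -> cycle_rep (nxt i) = cycle_rep i.
Proof. by move=> lt_in; rewrite /cycle_rep cycle_no_nxt. Qed.

Lemma cycle_no_nth j : j < size cycle_reps -> cycle_no (nth 0 cycle_reps j) = j.
Proof.
move=> lt_j; apply: find_first_nth => //=; first exact: cycle_of_self.
move=> k lt_kj; apply/negP => s_k; have lt_k : k < size cycle_reps by lia.
have := cycle_reps_eq (mem_nth 0 lt_k) (mem_nth 0 lt_j) s_k (cycle_of_self _).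
by move/eqP; rewrite nth_uniq ?cycle_reps_uniq //; lia.
Qed.

Lemma cycle_rep_nth j : j < size cycle_reps -> cycle_rep (nth 0 cycle_reps j) = nth 0 cycle_reps j.
Proof. by move=> lt_j; rewrite /cycle_rep cycle_no_nth. Qed.

Lemma size_cycle_reps_gt0 : 0 < n -> 0 < size cycle_reps.
Proof. by move/cycle_no_lt; lia. Qed.

Lemma cycle_pos_lt i : i < n -> cycle_pos i < cycle_len (cycle_rep i).
Proof. by move=> lt_in; rewrite /cycle_pos -size_cycle_of index_mem mem_cycle_of_rep. Qed.

Lemma iter_cycle_pos i : i < n -> iter (cycle_pos i) nxt (cycle_rep i) = i.
Proof.
by move=> lt_in; rewrite -nth_cycle_of ?cycle_pos_lt // nth_index // mem_cycle_of_rep.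
Qed.

Lemma cycle_pos_nxt i : i < n ->
  cycle_pos (nxt i) = if (cycle_pos i).+1 < cycle_len (cycle_rep i) then (cycle_pos i).+1 else 0.
Proof.
move=> lt_in; have lt_c := cycle_pos_lt lt_in.
rewrite {1}/cycle_pos cycle_rep_nxt // -{1}(iter_cycle_pos lt_in) -iterS.
case: ltnP => [lt_c1|le_c1].
  by rewrite -nth_cycle_of // index_uniq ?size_cycle_of // cycle_of_uniq ?cycle_rep_lt.
have -> : (cycle_pos i).+1 = cycle_len (cycle_rep i) by lia.
by rewrite iter_cycle_len ?cycle_rep_lt // /cycle_of /= eqxx.
Qed.

Variable k : nat -> int.

Definition ksum s m : int := (\sum_(j <- traject nxt s m) k j)%R.
(* In the strand presentation, x_i = x_(cycle_rep i) y^(offset i). *)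
Definition offset i : int := (- ksum (cycle_rep i) (cycle_pos i))%R.
Definition cycle_sums := [seq (\sum_(j <- cycle_of s) k j)%R | s <- cycle_reps].

Lemma ksumS s m : ksum s m.+1 = (ksum s m + k (iter m nxt s))%R.
Proof. by rewrite /ksum trajectSr big_rcons. Qed.

Lemma offset_nxt i : i < n ->
  (offset (nxt i) + k i - offset i = 0)%R \/
  (offset (nxt i) + k i - offset i = ksum (cycle_rep i) (cycle_len (cycle_rep i)))%R.
Proof.
move=> lt_in; have Ei := iter_cycle_pos lt_in; have lt_c := cycle_pos_lt lt_in.
rewrite /offset cycle_rep_nxt // cycle_pos_nxt //; case: ltnP => [_|le_c1]; [left|right].
  by rewrite ksumS Ei; lia.
have -> : cycle_len (cycle_rep i) = (cycle_pos i).+1 by lia.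
by rewrite ksumS Ei [ksum _ 0]big_nil; lia.
Qed.

Local Notation strand_rel_k := (strand_rel n nxt k).

Lemma greq_X_iter s m : s < n ->
  greq strand_rel_k [:: X (iter m nxt s)] (X s :: ypow 0 (- ksum s m)%R).
Proof.
move=> lt_sn; elim: m => [|m IH]; first by rewrite [ksum _ 0]big_nil.
have lt_mn := iter_nxt_lt m lt_sn.
have step : greq strand_rel_k [:: X (iter m.+1 nxt s)]
    (X (iter m nxt s) :: ypow 0 (- k (iter m nxt s))%R).
  apply: greq_catwinv; rewrite winv_cons winv_ypow opprK /=.
  by apply: greq_relator; left; exists (iter m nxt s).
by rewrite step -cat1s IH cat_cons ksumS opprD ypowD.
Qed.

Lemma greq_ypow_ksum s : s < n -> greq strand_rel_k (ypow 0 (ksum s (cycle_len s))) [::].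
Proof.
move=> lt_sn; have := greq_X_iter (cycle_len s) lt_sn; rewrite iter_cycle_len // => E.
have E' : greq strand_rel_k (ypow 0 (- ksum s (cycle_len s))%R) [::].
  transitivity ([:: XV s] ++ X s :: ypow 0 (- ksum s (cycle_len s))%R).
    by symmetry; apply: (greq_red _ [::] _ (XV s)).
  by rewrite -E; exact: (greq_linvr _ (XV s)).
by rewrite -[ypow 0 _]winvK winv_ypow E'.
Qed.

Local Notation c := (size cycle_reps).
Local Notation power_rel_k := (power_rel c cycle_sums).

Definition to_cycles (a : fgen) : fword :=
  if a.1 then [:: Y 0] else X (cycle_no a.2) :: ypow 0 (offset a.2).

Definition from_cycles (a : fgen) : fword :=
  if a.1 then [:: Y 0] else [:: X (nth 0 cycle_reps a.2)].

Lemma subst_yrel_Y0 R m s r : (forall j, s (true, j) = [:: Y 0]) ->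
  yrel m r -> greq R (subst s r) [::].
Proof.
move=> sY [i [_ ->]]; rewrite subst_cons subst1V /subst_letter /= !sY.
exact: greq_linvr.
Qed.

Lemma to_cycles_rel r : strand_rel_k r -> greq power_rel_k (subst to_cycles r) [::].
Proof.
case=> [[i lt_in ->]|]; last exact: subst_yrel_Y0.
rewrite subst_cons subst_cat subst1V (subst_ypow _ (erefl _)) /subst_letter /=.
rewrite cycle_no_nxt // winv_cons winv_ypow.
transitivity (X (cycle_no i) :: ypow 0 (offset (nxt i) + k i - offset i)%R ++ [:: XV (cycle_no i)]).
  by rewrite !ypowD -!catA.
have trivial_sum : greq power_rel_k (ypow 0 (offset (nxt i) + k i - offset i)%R) [::].
  have [->|->] := offset_nxt lt_in; first by [].
  apply: greq_relator; left; exists (ksum (cycle_rep i) (cycle_len (cycle_rep i))) => //.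
  by apply/mapP; exists (cycle_rep i); rewrite ?cycle_rep_in.
by rewrite trivial_sum; apply: (greq_linvr _ (X _)).
Qed.

Lemma from_cycles_rel r : power_rel_k r -> greq strand_rel_k (subst from_cycles r) [::].
Proof.
case=> [[K /mapP [s s_rep ->] ->]|]; last exact: subst_yrel_Y0.
by rewrite (subst_ypow _ (erefl _)); apply/greq_ypow_ksum/cycle_reps_lt.
Qed.

Lemma from_to_cycles a : a.2 < n ->
  greq strand_rel_k (subst from_cycles (to_cycles a)) [:: (a, false)].
Proof.
case: a => [[] i] /= lt_in.
  by rewrite subst1; symmetry; apply: (greq_Y0 (@strand_rel_yrel n nxt k)).
rewrite subst_cons (subst_ypow _ (erefl _)) /subst_letter /=.
by rewrite -[in X in greq _ _ X](iter_cycle_pos lt_in) (greq_X_iter _ (cycle_rep_lt lt_in)).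
Qed.

Lemma to_from_cycles a : a.2 < c ->
  greq power_rel_k (subst to_cycles (from_cycles a)) [:: (a, false)].
Proof.
case: a => [[] j] /= lt_jc.
  by rewrite subst1; symmetry; apply: (greq_Y0 (@power_rel_yrel c _)).
rewrite subst1 /to_cycles /= cycle_no_nth // /offset /cycle_pos cycle_rep_nth //.
by rewrite /cycle_of /= eqxx [ksum _ 0]big_nil.
Qed.

Lemma pres_iso_strand_power : 0 < n -> pres_iso n strand_rel_k c power_rel_k.
Proof.
move=> gt0n; have gt0c := size_cycle_reps_gt0 gt0n.
exists to_cycles, from_cycles; split; [|split; [|split; [|split; [|split]]]].
- case=> [[] i] /= lt_in; first by rewrite /valid /= gt0c.
  by rewrite cycle_no_lt // (valid_ypow _ gt0c).
- case=> [[] j] /= lt_jc; first by rewrite /valid /= gt0n.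
  by rewrite /valid /= andbT cycle_reps_lt // mem_nth.
- exact: to_cycles_rel.
- exact: from_cycles_rel.
- exact: from_to_cycles.
- exact: to_from_cycles.
Qed.

End Cycles.

(** * One generator per component of the closure *)

Section BraidClosure.
Variables (n : nat) (w : seq (fvb_gen n)).

Let nxt s := index s (cl_data w).1.
Let k j := scount (nth [::] (cl_data w).2 j).

Lemma fvb_closureE : fvb_closure w =
  [seq flatten [seq nth [::] (cl_data w).2 j | j <- cycle_of n nxt s] | s <- cycle_reps n nxt].
Proof. by []. Qed.

Lemma closure_nxt_lt s : s < n -> nxt s < n.
Proof.
move=> lt_sn; rewrite /nxt cl_data_index //.
by have [_ /(_ s lt_sn) []] := cl_data_follow w.
Qed.

Lemma closure_nxt_inj s t : s < n -> t < n -> nxt s = nxt t -> s = t.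
Proof.
move=> lt_sn lt_tn; rewrite /nxt !cl_data_index // => E.
have [_ IH] := cl_data_follow w; have [_ <- _] := IH s lt_sn; have [_ <- _] := IH t lt_tn.
by rewrite E.
Qed.

Lemma scounts_fvb_closure : map scount (fvb_closure w) = cycle_sums n nxt k.
Proof.
rewrite fvb_closureE -map_comp; apply: eq_map => s.
by apply: etrans (scount_flatten _) _; rewrite big_map.
Qed.

Lemma size_fvb_closure_gt0 : 0 < n -> 0 < size (fvb_closure w).
Proof. by rewrite fvb_closureE size_map; apply: size_cycle_reps_gt0 closure_nxt_lt closure_nxt_inj. Qed.

Lemma pres_iso_Grel_power : 0 < n ->
  pres_iso n (Grel w) (size (fvb_closure w))
    (power_rel (size (fvb_closure w)) (map scount (fvb_closure w))).
Proof.
move=> gt0n; apply: pres_iso_trans (pres_iso_Grel_strand_rel w) _.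
apply: (@pres_iso_trans _ _ _ (strand_rel n nxt k)).
  have follow_nxt i : i < n -> (follow w i).1 = nxt i /\ (follow w i).2 = k i.
    by move=> lt_in; rewrite /nxt cl_data_index //; have [_ /(_ i lt_in) []] := cl_data_follow w.
  apply: pres_iso_eqrel => r [[i lt_in ->]|yr]; try exact: strand_rel_yrel;
  by apply: greq_relator; left; exists i => //; have [-> ->] := follow_nxt i lt_in.
rewrite scounts_fvb_closure fvb_closureE size_map.
exact: (pres_iso_strand_power closure_nxt_lt closure_nxt_inj k gt0n).
Qed.

End BraidClosure.

Lemma fvb_closure0 (w : seq (fvb_gen 0)) : fvb_closure w = [::].
Proof. by []. Qed.

Lemma pres_iso_power_rel_perm c Ks Ks' :
  perm_eq Ks Ks' -> pres_iso c (power_rel c Ks) c (power_rel c Ks').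
Proof.
move=> pKs; apply: pres_iso_eqrel => r [[K K_in ->]|yr];
  apply: greq_relator; [left; exists K | right | left; exists K | right] => //.
- by rewrite -(perm_mem pKs).
- by rewrite (perm_mem pKs).
Qed.

Theorem theorem8 (n n' : nat) (w : seq (fvb_gen n)) (w' : seq (fvb_gen n')) :
  flat_equiv (fvb_closure w) (fvb_closure w') ->
  pres_iso n (Grel w) n' (Grel w').
Proof.
move/flat_equiv_perm_scounts => pKs.
have Ec : size (fvb_closure w) = size (fvb_closure w').
  by have := perm_size pKs; rewrite !size_map.
case: n w pKs Ec => [|n] w pKs Ec; case: n' w' pKs Ec => [|n'] w' pKs Ec.
- exists (fun=> [::]), (fun=> [::]).
  by do !split; try by [case | move=> r [i []]].
- by have := size_fvb_closure_gt0 w' (ltn0Sn n'); rewrite -Ec fvb_closure0.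
- by have := size_fvb_closure_gt0 w (ltn0Sn n); rewrite Ec fvb_closure0.
apply: pres_iso_trans (pres_iso_Grel_power w (ltn0Sn n)) _.
apply: pres_iso_sym; apply: pres_iso_trans (pres_iso_Grel_power w' (ltn0Sn n')) _.
by rewrite -Ec; apply: pres_iso_power_rel_perm; rewrite perm_sym.
Qed.
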